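(* For each semiquasitriangular Hopf algebra $(H,R)$ with Drinfeld element $u=S(R^{(2)})R^{(1)}$, one has $S^2(u)=u$, $S^2(u^{-1})=u^{-1}$ and $uS(u)=S(u)u$.
   Context: All vector spaces are over a field $k$, $\otimes=\otimes_k$. For a Hopf algebra $H$ with comultiplication $\Delta$, counit $\epsilon$, antipode $S$, we use Sweedler notation $\Delta(h)=h_1\otimes h_2$, etc. $\operatorname{Z}(H)$ is the centre of $H$. For $R\in H\otimes H$ we write $R=R^{(1)}\otimes R^{(2)}$ (summation understood); $R'^{(1)}\otimes R'^{(2)}$ denotes another copy of $R$. Definition (semiquasitriangular Hopf algebra): a pair $(H,R)$ with $H$ a Hopf algebra with bijective antipode and $R\in H\otimes H$ invertible such that (1) $R^{(1)}_1\otimes R^{(1)}_2\otimes R^{(2)} = R^{(1)}\otimes R'^{(1)}\otimes R^{(2)}R'^{(2)}$; (2) $R^{(1)}\otimes R^{(2)}_1\otimes R^{(2)}_2 = R^{(1)}R'^{(1)}\otimes R'^{(2)}\otimes R^{(2)}$; (3) $R^{(1)}\otimes R^{(2)}_2R'^{(1)}\otimes R^{(2)}_1R'^{(2)} = R^{(1)}\otimes R'^{(1)}R^{(2)}_1\otimes R'^{(2)}R^{(2)}_2$; (4) $R^{(1)}_2R'^{(1)}\otimes R^{(1)}_1R'^{(2)}\otimes R^{(2)} = R'^{(1)}R^{(1)}_1\otimes R'^{(2)}R^{(1)}_2\otimes R^{(2)}$; (5) $\nu(h):=R^{(2)}h_2R'^{(2)}\otimes S(h_1)S(R^{(1)})h_3R'^{(1)}\in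 H\otimes\operatorname{Z}(H)$ for all $h\in H$; (6) $\nu(h)=R^{(1)}h_2R'^{(1)}\otimes S(R'^{(2)})S(h_1)R^{(2)}h_3$ for all $h\in H$. The Drinfeld element $u$ is invertible (with $u^{-1}=R^{(2)}S^2(R^{(1)})$). *)

(* Elements of H (x) H and H (x) H (x) H are represented by finite formal sums
   (lists of pairs/triples of elements of H).  Two formal sums are equal as
   elements of the tensor product iff they agree under every multilinear map
   into every k-vector space (universal property of the tensor product). *)
From HB Require Import structures.
From mathcomp Require Import all_boot all_order all_algebra.
Set Implicit Arguments. Unset Strict Implicit. Unset Printing Implicit Defensive.
Import GRing.Theory.
Local Open Scope ring_scope.

Section Hopf.
Variables (k : fieldType) (H : algType k).

Definition lin_in (W : lmodType k) (g : H -> W) : Prop :=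
  forall (a : k) (x y : H), g (a *: x + y) = a *: g x + g y.

Definition teq2 (s t : seq (H * H)) : Prop :=
  forall (W : lmodType k) (f : H -> H -> W),
    (forall b, lin_in (fun a => f a b)) -> (forall a, lin_in (f a)) ->
    \sum_(p <- s) f p.1 p.2 = \sum_(p <- t) f p.1 p.2.

Definition teq3 (s t : seq (H * H * H)) : Prop :=
  forall (W : lmodType k) (f : H -> H -> H -> W),
    (forall b c, lin_in (fun a => f a b c)) ->
    (forall a c, lin_in (fun b => f a b c)) ->
    (forall a b, lin_in (f a b)) ->
    \sum_(p <- s) f p.1.1 p.1.2 p.2 = \sum_(p <- t) f p.1.1 p.1.2 p.2.

Definition tmul2 (s t : seq (H * H)) : seq (H * H) :=
  [seq (p.1 * q.1, p.2 * q.2) | p <- s, q <- t].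

Definition central (z : H) : Prop := forall x : H, x * z = z * x.

(* Hopf algebra with bijective antipode: comultiplication D (Sweedler:
   D h = sum h_1 (x) h_2), counit e, antipode S. *)
Record hopf_algebra (D : H -> seq (H * H)) (e : H -> k) (S : H -> H) : Prop := {
  hD_lin : forall (a : k) (x y : H),
     teq2 (D (a *: x + y)) ([seq (a *: p.1, p.2) | p <- D x] ++ D y);
  hD_coassoc : forall h : H,
     teq3 [seq (q.1, q.2, p.2) | p <- D h, q <- D p.1]
          [seq (p.1, q.1, q.2) | p <- D h, q <- D p.2];
  he_lin : forall (a : k) (x y : H), e (a *: x + y) = a * e x + e y;
  he_counitl : forall h : H, \sum_(p <- D h) e p.1 *: p.2 = h;
  he_counitr : forall h : H, \sum_(p <- D h) e p.2 *: p.1 = h;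
  hD_mul : forall x y : H, teq2 (D (x * y)) (tmul2 (D x) (D y));
  hD_one : teq2 (D 1) [:: (1, 1)];
  he_mul : forall x y : H, e (x * y) = e x * e y;
  he_one : e 1 = 1;
  hS_lin : forall (a : k) (x y : H), S (a *: x + y) = a *: S x + S y;
  hS_antipodel : forall h : H, \sum_(p <- D h) S p.1 * p.2 = (e h)%:A;
  hS_antipoder : forall h : H, \sum_(p <- D h) p.1 * S p.2 = (e h)%:A;
  hS_bij : bijective S
}.

(* h_1 (x) h_2 (x) h_3 := (D (x) id) D h *)
Definition D3 (D : H -> seq (H * H)) (h : H) : seq (H * H * H) :=
  [seq (q.1, q.2, p.2) | p <- D h, q <- D p.1].

(* nu(h) = R2 h_2 R'2 (x) S(h_1) S(R1) h_3 R'1 *)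
Definition nu (D : H -> seq (H * H)) (S : H -> H) (R : seq (H * H)) (h : H)
  : seq (H * H) :=
  [seq (p.2 * tq.1.1.2 * tq.2.2, S tq.1.1.1 * S p.1 * tq.1.2 * tq.2.1)
  | p <- R, tq <- [seq (t, q) | t <- D3 D h, q <- R]].

(* R1 h_2 R'1 (x) S(R'2) S(h_1) R2 h_3 *)
Definition nu' (D : H -> seq (H * H)) (S : H -> H) (R : seq (H * H)) (h : H)
  : seq (H * H) :=
  [seq (p.1 * tq.1.1.2 * tq.2.1, S tq.2.2 * S tq.1.1.1 * p.2 * tq.1.2)
  | p <- R, tq <- [seq (t, q) | t <- D3 D h, q <- R]].

Record semiquasitriangular (D : H -> seq (H * H)) (S : H -> H)
    (R : seq (H * H)) : Prop := {
  sq_inv : exists Ri : seq (H * H),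
      teq2 (tmul2 R Ri) [:: (1, 1)] /\ teq2 (tmul2 Ri R) [:: (1, 1)];
  sq1 : teq3 [seq (q.1, q.2, p.2) | p <- R, q <- D p.1]
             [seq (p.1, q.1, p.2 * q.2) | p <- R, q <- R];
  sq2 : teq3 [seq (p.1, q.1, q.2) | p <- R, q <- D p.2]
             [seq (p.1 * q.1, q.2, p.2) | p <- R, q <- R];
  sq3 : teq3 [seq (p.1, dq.1.2 * dq.2.1, dq.1.1 * dq.2.2)
             | p <- R, dq <- [seq (d, q) | d <- D p.2, q <- R]]
             [seq (p.1, dq.2.1 * dq.1.1, dq.2.2 * dq.1.2)
             | p <- R, dq <- [seq (d, q) | d <- D p.2, q <- R]];
  sq4 : teq3 [seq (dq.1.2 * dq.2.1, dq.1.1 * dq.2.2, p.2)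
             | p <- R, dq <- [seq (d, q) | d <- D p.1, q <- R]]
             [seq (dq.2.1 * dq.1.1, dq.2.2 * dq.1.2, p.2)
             | p <- R, dq <- [seq (d, q) | d <- D p.1, q <- R]];
  (* nu(h) lies in H (x) Z(H) *)
  sq5 : forall h : H, exists t : seq (H * H),
      (forall p, p \in t -> central p.2) /\ teq2 (nu D S R h) t;
  sq6 : forall h : H, teq2 (nu D S R h) (nu' D S R h)
}.

Definition drinfeld (S : H -> H) (R : seq (H * H)) : H :=
  \sum_(p <- R) S p.2 * p.1.

End Hopf.

From HB Require Import structures.
From mathcomp Require Import all_boot all_order all_algebra.
Set Implicit Arguments. Unset Strict Implicit. Unset Printing Implicit Defensive.
Import GRing.Theory.
Local Open Scope ring_scope.

(** Both [(S ⊗ id) R] and [(id ⊗ S^-1) R] are left inverses of [R]: this follows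
   from [sq1] and [sq2] together with the counit identities
   [(ε ⊗ id) R = 1 = (id ⊗ ε) R], which in turn follow from [sq1], [sq2] and the
   invertibility of [R].  Hence [(S ⊗ S) R = R], which gives [S^2 u = u]
   directly, and [S^2 (u^-1) = u^-1] because [S^2] is multiplicative.
   For the commutation, [sq3] and [sq4] show that the twisted adjoint action
   [S(h_2) u h_1] equals [ε(h) u] on either leg of [R]; combined with
   [S^2(h_3) S(h_2) y h_1 = y h] and [sq1], [sq2] this yields [S^2(r) u = u r]
   for [r] on either leg of [R], whence
   [S(u) u = S(R^1) S^2(R^2) u = S(R^1) u R^2 = S^2(R^1) u S(R^2)
          = u R^1 S(R^2) = u S(u)]. *)

Section Linearity.
Variables (k : fieldType) (H : algType k) (W : lmodType k).
Implicit Types (g : H -> W).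

Lemma lin_inD g : lin_in g -> {morph g : x y / x + y}.
Proof. by move=> hg x y; have := hg 1 x y; rewrite !scale1r. Qed.

Lemma lin_in0 g : lin_in g -> g 0 = 0.
Proof. by move=> hg; apply: (addIr (g 0)); rewrite -(lin_inD hg) !add0r. Qed.

Lemma lin_inZ g : lin_in g -> forall a, {morph g : x / a *: x}.
Proof. by move=> hg a x; have := hg a x 0; rewrite !addr0 (lin_in0 hg) addr0. Qed.

Lemma lin_in_sum g I (r : seq I) (G : I -> H) : lin_in g ->
  g (\sum_(i <- r) G i) = \sum_(i <- r) g (G i).
Proof. by move=> hg; apply: big_morph; [apply: lin_inD | apply: lin_in0]. Qed.

Lemma lin_in_sumZ g I (r : seq I) (c : I -> k) (G : I -> H) : lin_in g ->
  g (\sum_(i <- r) c i *: G i) = \sum_(i <- r) c i *: g (G i).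
Proof.
by move=> hg; rewrite lin_in_sum //; apply: eq_bigr => i _; rewrite lin_inZ.
Qed.

Lemma lin_in_big I (r : seq I) (F : I -> H -> W) :
  (forall i, lin_in (F i)) -> lin_in (fun a => \sum_(i <- r) F i a).
Proof.
move=> hF a x y; rewrite scaler_sumr -big_split /=.
by apply: eq_bigr => i _; rewrite hF.
Qed.

Definition bilin (f : H -> H -> W) :=
  (forall b, lin_in (f^~ b)) /\ (forall a, lin_in (f a)).

Definition trilin (f : H -> H -> H -> W) :=
  [/\ forall b c, lin_in (fun a => f a b c), forall a c, lin_in (fun b => f a b c)
    & forall a b, lin_in (f a b)].

Lemma bilinDl f : bilin f -> forall b a x y, f (a *: x + y) b = a *: f x b + f y b.
Proof. by case. Qed.

Lemma bilinDr f : bilin f -> forall a b x y, f a (b *: x + y) = b *: f a x + f a y.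
Proof. by case. Qed.

Lemma bilinZl f : bilin f -> forall b a x, f (a *: x) b = a *: f x b.
Proof. by case=> hf _ b; apply: lin_inZ. Qed.

Lemma bilinZr f : bilin f -> forall a b x, f a (b *: x) = b *: f a x.
Proof. by case=> _ hf a; apply: lin_inZ. Qed.

End Linearity.

Section Hopf.
Variables (k : fieldType) (H : algType k).
Variables (D : H -> seq (H * H)) (e : H -> k) (S : H -> H).
Hypothesis hH : hopf_algebra D e S.

Lemma lin_antipode : lin_in S.
Proof. exact: hS_lin hH. Qed.

(* [linearity] closes [lin_in] goals for expressions built from the ring and
   module operations, [S], [e], finite sums and the [bilin]/[lin_in]
   hypotheses in the context. *)
Ltac rewrite_lin_hyps := repeat match goal with
  | hf : bilin _ |- _ =>
      progress rewrite ?(bilinDl hf) ?(bilinDr hf) ?(bilinZl hf) ?(bilinZr hf)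
  | hg : lin_in _ |- _ => progress rewrite ?hg ?(lin_inZ hg)
  end.

Ltac linearity :=
  repeat (apply: lin_in_big => ?); move=> ? ? ? /=;
  repeat progress (rewrite ?mulrDr ?mulrDl -?scalerAr -?scalerAl ?lin_antipode
    ?(he_lin hH) ?scalerDl -?scalerA ?scalerDr; rewrite_lin_hyps);
  first [ done | by rewrite !scalerA mulrC
        | by rewrite !scalerA; congr (_ + _); congr (_ *: _); rewrite mulrC ].
Ltac bilinearity := split=> ?; linearity.
Ltac trilinearity := split=> ? ?; linearity.

Section Sums.
Variable W : lmodType k.

Lemma lin_in_comul (G : H * H -> W) :
  bilin (fun a b => G (a, b)) -> lin_in (fun h => \sum_(p <- D h) G p).
Proof.
case=> hl hr a x y.
have pairE h : \sum_(p <- D h) G p = \sum_(p <- D h) G (p.1, p.2).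
  by apply: eq_bigr => -[].
rewrite !pairE (hD_lin hH a x y hl hr) big_cat big_map /= scaler_sumr.
by congr (_ + _); apply: eq_bigr => -[u v] _; rewrite /= (lin_inZ (hl v)).
Qed.

Lemma big_coassoc h (f : H -> H -> H -> W) : trilin f ->
  \sum_(p <- D h) \sum_(q <- D p.1) f q.1 q.2 p.2 =
  \sum_(p <- D h) \sum_(q <- D p.2) f p.1 q.1 q.2.
Proof. by case=> h1 h2 h3; have := hD_coassoc hH h h1 h2 h3; rewrite !big_allpairs_dep. Qed.

Lemma big_comulM x y (f : H -> H -> W) : bilin f ->
  \sum_(p <- D (x * y)) f p.1 p.2 =
  \sum_(p <- D x) \sum_(q <- D y) f (p.1 * q.1) (p.2 * q.2).
Proof. by case=> h1 h2; have := hD_mul hH x y h1 h2; rewrite big_allpairs_dep. Qed.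

Lemma big_comul1 (f : H -> H -> W) : bilin f -> \sum_(p <- D 1) f p.1 p.2 = f 1 1.
Proof. by case=> h1 h2; have := hD_one hH h1 h2; rewrite big_seq1. Qed.

Lemma big_counitl (F : H -> W) h : lin_in F -> \sum_(p <- D h) e p.1 *: F p.2 = F h.
Proof. by move=> hF; rewrite -{2}(he_counitl hH h) lin_in_sumZ. Qed.

Lemma big_counitr (F : H -> W) h : lin_in F -> \sum_(p <- D h) e p.2 *: F p.1 = F h.
Proof. by move=> hF; rewrite -{2}(he_counitr hH h) lin_in_sumZ. Qed.

Lemma big_antipodel (F : H -> W) h : lin_in F ->
  \sum_(p <- D h) F (S p.1 * p.2) = e h *: F 1.
Proof. by move=> hF; rewrite -lin_in_sum // (hS_antipodel hH) lin_inZ. Qed.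

Lemma big_antipoder (F : H -> W) h : lin_in F ->
  \sum_(p <- D h) F (p.1 * S p.2) = e h *: F 1.
Proof. by move=> hF; rewrite -lin_in_sum // (hS_antipoder hH) lin_inZ. Qed.

End Sums.

Lemma antipode1 : S 1 = 1.
Proof.
have := hS_antipodel hH 1; rewrite (he_one hH) scale1r.
by rewrite (big_comul1 (f := fun a b => S a * b)) ?mulr1 //; bilinearity.
Qed.

Lemma antipodeM_left x y :
  \sum_(p <- D x) \sum_(q <- D p.1) \sum_(p' <- D y) \sum_(q' <- D p'.1)
    S (q.1 * q'.1) * (q.2 * q'.2) * S p'.2 * S p.2 = S y * S x.
Proof.
transitivity (\sum_(p <- D x) \sum_(p' <- D y) (e p.1 * e p'.1) *: (S p'.2 * S p.2)).
  apply: eq_bigr => p _; rewrite exchange_big; apply: eq_bigr => p' _.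
  rewrite -(big_comulM _ _ (f := fun a b => S a * b * S p'.2 * S p.2)); last by bilinearity.
  rewrite (big_antipodel (F := fun z => z * S p'.2 * S p.2)) ?mul1r ?(he_mul hH) //.
  by linearity.
transitivity (\sum_(p <- D x) e p.1 *: (S y * S p.2)).
  apply: eq_bigr => p _.
  rewrite -(big_counitl (F := fun z => S z * S p.2)); last by linearity.
  by rewrite scaler_sumr; apply: eq_bigr => p' _; rewrite scalerA.
by rewrite (big_counitl (F := fun z => S y * S z)) //; linearity.
Qed.

Lemma antipodeM_right x y :
  \sum_(p <- D x) \sum_(q <- D p.2) \sum_(p' <- D y) \sum_(q' <- D p'.2)
    S (p.1 * p'.1) * (q.1 * q'.1) * S q'.2 * S q.2 = S (x * y).
Proof.
have inner a b c h : \sum_(r <- D h) a * (b * r.1) * S r.2 * c = e h *: (a * b * c).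
  transitivity (\sum_(r <- D h) (fun z => a * b * z * c) (r.1 * S r.2)).
    by apply: eq_bigr => r _; rewrite /= !mulrA.
  by rewrite (big_antipoder (F := fun z => a * b * z * c)) ?mulr1 //; linearity.
transitivity (\sum_(p <- D x) \sum_(p' <- D y) e p'.2 *: (e p.2 *: S (p.1 * p'.1))).
  apply: eq_bigr => p _; rewrite exchange_big; apply: eq_bigr => p' _.
  under eq_bigr do rewrite inner.
  rewrite -scaler_sumr; congr (_ *: _).
  transitivity (\sum_(q <- D p.2) (fun z => S (p.1 * p'.1) * z) (q.1 * S q.2)).
    by apply: eq_bigr => q _; rewrite /= !mulrA.
  by rewrite (big_antipoder (F := fun z => S (p.1 * p'.1) * z)) ?mulr1 //; linearity.
transitivity (\sum_(p <- D x) e p.2 *: S (p.1 * y)).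
  apply: eq_bigr => p _.
  rewrite -(big_counitr (F := fun z => S (p.1 * z)) y); last by linearity.
  by rewrite scaler_sumr; apply: eq_bigr => p' _; rewrite !scalerA mulrC.
by rewrite (big_counitr (F := fun z => S (z * y))) //; linearity.
Qed.

Lemma antipodeM x y : S (x * y) = S y * S x.
Proof.
rewrite -antipodeM_left -antipodeM_right.
rewrite (big_coassoc x (f := fun a1 a2 a3 => \sum_(p' <- D y) \sum_(q' <- D p'.1)
    S (a1 * q'.1) * (a2 * q'.2) * S p'.2 * S a3)); last by trilinearity.
apply: eq_bigr => p _; apply: eq_bigr => q _.
by rewrite (big_coassoc y (f := fun b1 b2 b3 => S (p.1 * b1) * (q.1 * b2) * S b3 * S q.2)) //;
  trilinearity.
Qed.

Lemma antipode2M x y : S (S (x * y)) = S (S x) * S (S y).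
Proof. by rewrite !antipodeM. Qed.

Section InverseAntipode.
Variable Si : H -> H.
Hypotheses (SiK : cancel S Si) (SKi : cancel Si S).

Lemma lin_inv_antipode : lin_in Si.
Proof.
by move=> a x y; apply: (can_inj SiK); rewrite lin_antipode !SKi.
Qed.

Lemma big_inv_antipode (W : lmodType k) (F : H -> W) h : lin_in F ->
  \sum_(p <- D h) F (Si p.2 * p.1) = e h *: F 1.
Proof.
move=> hF; rewrite -lin_in_sum // -(lin_inZ hF); congr (F _); apply: (can_inj SiK).
rewrite (lin_in_sum _ _ lin_antipode); under eq_bigr do rewrite antipodeM SKi.
by rewrite (hS_antipodel hH) (lin_inZ lin_antipode) antipode1.
Qed.
End InverseAntipode.

Definition sadj (y h : H) : H := \sum_(c <- D h) S c.2 * y * c.1.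

Lemma lin_sadj y : lin_in (sadj y).
Proof.
by apply: (lin_in_comul (G := fun c => S c.2 * y * c.1)); bilinearity.
Qed.

Lemma big_antipode2_sadj y h :
  \sum_(d <- D h) S (S d.2) * sadj y d.1 = y * h.
Proof.
transitivity (\sum_(d <- D h) \sum_(c <- D d.1) S (S d.2) * (S c.2 * y * c.1)).
  by apply: eq_bigr => d _; rewrite mulr_sumr.
rewrite (big_coassoc h (f := fun a b c => S (S c) * (S b * y * a))) /=;
  last by trilinearity.
transitivity (\sum_(d <- D h) e d.2 *: (y * d.1)).
  apply: eq_bigr => d _.
  transitivity (\sum_(c <- D d.2) (fun z => S z * y * d.1) (c.1 * S c.2)).
    by apply: eq_bigr => c _; rewrite /= antipodeM !mulrA.
  by rewrite (big_antipoder (F := fun z => S z * y * d.1)) ?antipode1 ?mul1r //; linearity.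
by rewrite (big_counitr (F := fun z => y * z)) //; linearity.
Qed.

Section Quasitriangular.
Variable R : seq (H * H).
Hypothesis hR : semiquasitriangular D S R.

Section RSums.
Variable W : lmodType k.

Lemma big_R_comul_l (f : H -> H -> H -> W) : trilin f ->
  \sum_(p <- R) \sum_(q <- D p.1) f q.1 q.2 p.2 =
  \sum_(p <- R) \sum_(q <- R) f p.1 q.1 (p.2 * q.2).
Proof. by case=> h1 h2 h3; have := sq1 hR h1 h2 h3; rewrite !big_allpairs_dep. Qed.

Lemma big_R_comul_r (f : H -> H -> H -> W) : trilin f ->
  \sum_(p <- R) \sum_(q <- D p.2) f p.1 q.1 q.2 =
  \sum_(p <- R) \sum_(q <- R) f (p.1 * q.1) q.2 p.2.
Proof. by case=> h1 h2 h3; have := sq2 hR h1 h2 h3; rewrite !big_allpairs_dep. Qed.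

Lemma big_R_comul_cop_r (f : H -> H -> H -> W) : trilin f ->
  \sum_(p <- R) \sum_(d <- D p.2) \sum_(q <- R) f p.1 (d.2 * q.1) (d.1 * q.2) =
  \sum_(p <- R) \sum_(d <- D p.2) \sum_(q <- R) f p.1 (q.1 * d.1) (q.2 * d.2).
Proof.
case=> h1 h2 h3; have := sq3 hR h1 h2 h3; rewrite !big_allpairs_dep /=.
by under eq_bigr do rewrite big_allpairs; under [RHS]eq_bigr do rewrite big_allpairs.
Qed.

Lemma big_R_comul_cop_l (f : H -> H -> H -> W) : trilin f ->
  \sum_(p <- R) \sum_(d <- D p.1) \sum_(q <- R) f (d.2 * q.1) (d.1 * q.2) p.2 =
  \sum_(p <- R) \sum_(d <- D p.1) \sum_(q <- R) f (q.1 * d.1) (q.2 * d.2) p.2.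
Proof.
case=> h1 h2 h3; have := sq4 hR h1 h2 h3; rewrite !big_allpairs_dep /=.
by under eq_bigr do rewrite big_allpairs; under [RHS]eq_bigr do rewrite big_allpairs.
Qed.

End RSums.

Section RInverse.
Variable Ri : seq (H * H).
Hypothesis hRi : teq2 (tmul2 R Ri) [:: (1, 1)].

Lemma big_R_Rinv (W : lmodType k) (f : H -> H -> W) : bilin f ->
  \sum_(p <- R) \sum_(q <- Ri) f (p.1 * q.1) (p.2 * q.2) = f 1 1.
Proof. by case=> h1 h2; have := hRi h1 h2; rewrite big_allpairs_dep big_seq1. Qed.

Lemma R_lcancel u v :
  (forall (W : lmodType k) (f : H -> H -> W), bilin f ->
     \sum_(p <- R) f (u * p.1) (v * p.2) = \sum_(p <- R) f p.1 p.2) ->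
  forall (W : lmodType k) (g : H -> H -> W), bilin g -> g u v = g 1 1.
Proof.
move=> uvR W g hg; rewrite -(big_R_Rinv hg).
rewrite -(uvR _ (fun a b => \sum_(q <- Ri) g (a * q.1) (b * q.2))); last by bilinearity.
rewrite -[in LHS](mulr1 u) -[in LHS](mulr1 v).
rewrite -(big_R_Rinv (f := fun a b => g (u * a) (v * b))); last by bilinearity.
by apply: eq_bigr => p _; apply: eq_bigr => q _; rewrite !mulrA.
Qed.

Lemma counit_R1 : \sum_(p <- R) e p.1 *: p.2 = 1.
Proof.
set c := \sum_(p <- R) e p.1 *: p.2.
have cR (W : lmodType k) (f : H -> H -> W) : bilin f ->
    \sum_(p <- R) f (1 * p.1) (c * p.2) = \sum_(p <- R) f p.1 p.2.
  move=> hf; symmetry.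
  transitivity (\sum_(p <- R) \sum_(q <- D p.1) e q.1 *: f q.2 p.2).
    by apply: eq_bigr => p _; rewrite (big_counitl (F := f^~ p.2)) //; case: hf.
  rewrite (big_R_comul_l (f := fun a b z => e a *: f b z)); last by trilinearity.
  rewrite exchange_big; apply: eq_bigr => q _ /=.
  rewrite mul1r mulr_suml (lin_in_sum _ _ (hf.2 q.1)); apply: eq_bigr => p _.
  by rewrite -scalerAl bilinZr.
have := R_lcancel cR (g := fun a b => e a *: b); rewrite /= (he_one hH) !scale1r.
by apply; bilinearity.
Qed.

Lemma counit_R2 : \sum_(p <- R) e p.2 *: p.1 = 1.
Proof.
set c := \sum_(p <- R) e p.2 *: p.1.
have cR (W : lmodType k) (f : H -> H -> W) : bilin f ->
    \sum_(p <- R) f (c * p.1) (1 * p.2) = \sum_(p <- R) f p.1 p.2.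
  move=> hf; symmetry.
  transitivity (\sum_(p <- R) \sum_(q <- D p.2) e q.2 *: f p.1 q.1).
    by apply: eq_bigr => p _; rewrite (big_counitr (F := f p.1)) //; case: hf.
  rewrite (big_R_comul_r (f := fun a b z => e z *: f a b)); last by trilinearity.
  rewrite exchange_big; apply: eq_bigr => q _ /=.
  rewrite mul1r mulr_suml (lin_in_sum _ _ (hf.1 q.2)); apply: eq_bigr => p _.
  by rewrite -scalerAl bilinZl.
have := R_lcancel cR (g := fun a b => e b *: a); rewrite /= (he_one hH) !scale1r.
by apply; bilinearity.
Qed.

Lemma antipodel_R_mulR (W : lmodType k) (f : H -> H -> W) : bilin f ->
  \sum_(p <- R) \sum_(q <- R) f (S p.1 * q.1) (p.2 * q.2) = f 1 1.
Proof.
move=> hf; rewrite -(big_R_comul_l (f := fun a b c => f (S a * b) c)); last by trilinearity.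
transitivity (\sum_(p <- R) f 1 (e p.1 *: p.2)).
  by apply: eq_bigr => p _; rewrite (big_antipodel (F := f^~ p.2)) ?bilinZr //; case: hf.
by rewrite -(lin_in_sum _ _ (hf.2 1)) counit_R1.
Qed.

Lemma inv_antipoder_R_mulR (Si : H -> H) : cancel S Si -> cancel Si S ->
  forall (W : lmodType k) (f : H -> H -> W), bilin f ->
  \sum_(p <- R) \sum_(q <- R) f (p.1 * q.1) (Si p.2 * q.2) = f 1 1.
Proof.
move=> SiK SKi W f hf; have hSi := lin_inv_antipode SiK SKi.
rewrite -(big_R_comul_r (f := fun a b c => f a (Si c * b))); last by trilinearity.
transitivity (\sum_(p <- R) f (e p.2 *: p.1) 1).
  apply: eq_bigr => p _.
  by rewrite (big_inv_antipode SiK SKi (F := f p.1)) ?bilinZl //; case: hf.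
by rewrite -(lin_in_sum _ _ (hf.1 1)) counit_R2.
Qed.

Lemma R_linv_eq (g1 g2 : H -> H) :
  (forall (W : lmodType k) (f : H -> H -> W), bilin f ->
    \sum_(p <- R) \sum_(q <- R) f (g1 p.1 * q.1) (g2 p.2 * q.2) = f 1 1) ->
  forall (W : lmodType k) (f : H -> H -> W), bilin f ->
    \sum_(p <- R) f (g1 p.1) (g2 p.2) = \sum_(r <- Ri) f r.1 r.2.
Proof.
move=> linvR W f hf.
transitivity (\sum_(p <- R) \sum_(q <- R) \sum_(r <- Ri)
     f (g1 p.1 * (q.1 * r.1)) (g2 p.2 * (q.2 * r.2))).
  apply: eq_bigr => p _.
  rewrite (big_R_Rinv (f := fun x y => f (g1 p.1 * x) (g2 p.2 * y))) ?mulr1 //.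
  by bilinearity.
transitivity (\sum_(r <- Ri) \sum_(p <- R) \sum_(q <- R)
     f (g1 p.1 * q.1 * r.1) (g2 p.2 * q.2 * r.2)).
  rewrite [RHS]exchange_big; apply: eq_bigr => p _; rewrite [RHS]exchange_big.
  by apply: eq_bigr => q _; apply: eq_bigr => r _; rewrite !mulrA.
apply: eq_bigr => r _.
by rewrite (linvR _ (fun x y => f (x * r.1) (y * r.2))) ?mul1r //; bilinearity.
Qed.

End RInverse.

Lemma antipode_tensor_R (W : lmodType k) (f : H -> H -> W) : bilin f ->
  \sum_(p <- R) f (S p.1) (S p.2) = \sum_(p <- R) f p.1 p.2.
Proof.
move=> hf; have [Si SiK SKi] := hS_bij hH; have [Ri [hRi _]] := sq_inv hR.
have hfS : bilin (fun a b => f a (S b)) by bilinearity.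
rewrite (R_linv_eq hRi (g2 := id) (antipodel_R_mulR hRi) hfS) /=.
rewrite -(R_linv_eq hRi (g1 := id) (inv_antipoder_R_mulR hRi SiK SKi) hfS) /=.
by apply: eq_bigr => p _; rewrite SKi.
Qed.

Local Notation u := (drinfeld S R).

Lemma antipode2_drinfeld : S (S u) = u.
Proof.
rewrite /drinfeld !(lin_in_sum _ _ lin_antipode).
under eq_bigr do rewrite !antipodeM.
rewrite (antipode_tensor_R (f := fun a b => S (S b) * S a)); last by bilinearity.
by rewrite (antipode_tensor_R (f := fun a b => S b * a)) //; bilinearity.
Qed.

Lemma antipode_drinfeld : S u = \sum_(p <- R) S p.1 * S (S p.2).
Proof.
rewrite /drinfeld (lin_in_sum _ _ lin_antipode).
by apply: eq_bigr => p _; rewrite antipodeM.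
Qed.

Lemma antipode_drinfeldE : S u = \sum_(p <- R) p.1 * S p.2.
Proof.
by rewrite antipode_drinfeld (antipode_tensor_R (f := fun a b => a * S b)) //; bilinearity.
Qed.

Lemma big_R_sadj_r (W : lmodType k) (f : H -> H -> W) : bilin f ->
  \sum_(p <- R) f p.1 (sadj u p.2) = \sum_(p <- R) f p.1 (e p.2 *: u).
Proof.
move=> hf.
transitivity (\sum_(p <- R) \sum_(d <- D p.2) \sum_(q <- R)
    f p.1 (S (q.2 * d.2) * (q.1 * d.1))).
  apply: eq_bigr => p _; rewrite /sadj (lin_in_sum _ _ (hf.2 p.1)).
  apply: eq_bigr => c _; rewrite /drinfeld mulr_sumr mulr_suml (lin_in_sum _ _ (hf.2 p.1)).
  by apply: eq_bigr => q _; rewrite antipodeM !mulrA.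
rewrite -(big_R_comul_cop_r (f := fun a b c => f a (S c * b))) /=; last by trilinearity.
apply: eq_bigr => p _; rewrite exchange_big /= bilinZr // /drinfeld.
rewrite (lin_in_sum _ _ (hf.2 p.1)) scaler_sumr; apply: eq_bigr => q _.
transitivity (\sum_(d <- D p.2) (fun z => f p.1 (S q.2 * z * q.1)) (S d.1 * d.2)).
  by apply: eq_bigr => d _; rewrite /= antipodeM !mulrA.
by rewrite (big_antipodel (F := fun z => f p.1 (S q.2 * z * q.1))) ?mulr1 //; linearity.
Qed.

Lemma big_R_sadj_l (W : lmodType k) (f : H -> H -> W) : bilin f ->
  \sum_(p <- R) f (sadj u p.1) p.2 = \sum_(p <- R) f (e p.1 *: u) p.2.
Proof.
move=> hf.
transitivity (\sum_(p <- R) \sum_(d <- D p.1) \sum_(q <- R)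
    f (S (q.2 * d.2) * (q.1 * d.1)) p.2).
  apply: eq_bigr => p _; rewrite /sadj (lin_in_sum _ _ (hf.1 p.2)).
  apply: eq_bigr => c _; rewrite /drinfeld mulr_sumr mulr_suml (lin_in_sum _ _ (hf.1 p.2)).
  by apply: eq_bigr => q _; rewrite antipodeM !mulrA.
rewrite -(big_R_comul_cop_l (f := fun a b c => f (S b * a) c)) /=; last by trilinearity.
apply: eq_bigr => p _; rewrite exchange_big /= bilinZl // /drinfeld.
rewrite (lin_in_sum _ _ (hf.1 p.2)) scaler_sumr; apply: eq_bigr => q _.
transitivity (\sum_(d <- D p.1) (fun z => f (S q.2 * z * q.1) p.2) (S d.1 * d.2)).
  by apply: eq_bigr => d _; rewrite /= antipodeM !mulrA.
by rewrite (big_antipodel (F := fun z => f (S q.2 * z * q.1) p.2)) ?mulr1 //; linearity.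
Qed.

Lemma big_R_drinfeld_r (W : lmodType k) (f : H -> H -> W) : bilin f ->
  \sum_(p <- R) f p.1 (S (S p.2) * u) = \sum_(p <- R) f p.1 (u * p.2).
Proof.
move=> hf; have hK := lin_sadj u; symmetry.
transitivity (\sum_(p <- R) \sum_(d <- D p.2) f p.1 (S (S d.2) * sadj u d.1)).
  by apply: eq_bigr => p _; rewrite -big_antipode2_sadj (lin_in_sum _ _ (hf.2 p.1)).
rewrite (big_R_comul_r (f := fun a b c => f a (S (S c) * sadj u b))) /=;
  last by trilinearity.
rewrite exchange_big /=.
rewrite (big_R_sadj_r (f := fun a b => \sum_(p <- R) f (p.1 * a) (S (S p.2) * b))) /=;
  last by bilinearity.
rewrite exchange_big /=.
rewrite -(big_R_comul_r (f := fun a b c => f a (S (S c) * (e b *: u)))) /=;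
  last by trilinearity.
apply: eq_bigr => p _.
transitivity (\sum_(d <- D p.2) e d.1 *: f p.1 (S (S d.2) * u)).
  by apply: eq_bigr => d _; rewrite -scalerAr bilinZr.
by rewrite (big_counitl (F := fun z => f p.1 (S (S z) * u))) //; linearity.
Qed.

Lemma big_R_drinfeld_l (W : lmodType k) (f : H -> H -> W) : bilin f ->
  \sum_(p <- R) f (S (S p.1) * u) p.2 = \sum_(p <- R) f (u * p.1) p.2.
Proof.
move=> hf; have hK := lin_sadj u; symmetry.
transitivity (\sum_(p <- R) \sum_(d <- D p.1) f (S (S d.2) * sadj u d.1) p.2).
  by apply: eq_bigr => p _; rewrite -big_antipode2_sadj (lin_in_sum _ _ (hf.1 p.2)).
rewrite (big_R_comul_l (f := fun a b c => f (S (S b) * sadj u a) c)) /=;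
  last by trilinearity.
rewrite (big_R_sadj_l (f := fun a b => \sum_(q <- R) f (S (S q.1) * a) (b * q.2))) /=;
  last by bilinearity.
rewrite -(big_R_comul_l (f := fun a b c => f (S (S b) * (e a *: u)) c)) /=;
  last by trilinearity.
apply: eq_bigr => p _.
transitivity (\sum_(d <- D p.1) e d.1 *: f (S (S d.2) * u) p.2).
  by apply: eq_bigr => d _; rewrite -scalerAr bilinZl.
by rewrite (big_counitl (F := fun z => f (S (S z) * u) p.2)) //; linearity.
Qed.

Lemma drinfeld_antipode_comm : u * S u = S u * u.
Proof.
symmetry; rewrite {1}antipode_drinfeld mulr_suml.
transitivity (\sum_(p <- R) S p.1 * (S (S p.2) * u)).
  by apply: eq_bigr => p _; rewrite mulrA.
rewrite (big_R_drinfeld_r (f := fun a b => S a * b)); last by bilinearity.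
rewrite -(antipode_tensor_R (f := fun a b => S a * (u * b))) /=; last by bilinearity.
transitivity (\sum_(p <- R) S (S p.1) * u * S p.2).
  by apply: eq_bigr => p _; rewrite mulrA.
rewrite (big_R_drinfeld_l (f := fun a b => a * S b)); last by bilinearity.
by rewrite antipode_drinfeldE mulr_sumr; apply: eq_bigr => p _; rewrite mulrA.
Qed.

Lemma antipode2_drinfeld_inv v : u * v = 1 -> v * u = 1 -> S (S v) = v.
Proof.
move=> uv vu; rewrite -[LHS]mulr1 -uv mulrA -antipode2_drinfeld -antipode2M vu.
by rewrite !antipode1 mul1r.
Qed.

End Quasitriangular.
End Hopf.

Theorem corollary3p5 (k : fieldType) (H : algType k)
    (D : H -> seq (H * H)) (e : H -> k) (S : H -> H) (R : seq (H * H))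
    (hH : hopf_algebra D e S) (hR : semiquasitriangular D S R) :
  let u := drinfeld S R in
  [/\ S (S u) = u,
      (forall v : H, u * v = 1 -> v * u = 1 -> S (S v) = v)
    & u * S u = S u * u].
Proof.
split.
- exact (antipode2_drinfeld hH hR).
- exact (antipode2_drinfeld_inv hH hR).
- exact (drinfeld_antipode_comm hH hR).
Qed.
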